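(* Let $d_\Phi=1$, let $\beta_\Phi\in\mathbb{R}^{d_Z}$ have all components nonzero, let $\beta_y\in\mathbb{R}^{d_Z}$, and let $b$ be an integer with $0\le b<d_Z$. Then $\mathcal{T}_{L_0}(b)=\{\theta\in\mathbb{R}:\|\beta_y-\theta\beta_\Phi\|_0\le b\}$ satisfies $$|\mathcal{T}_{L_0}(b)|\le\left\lfloor\frac{d_Z}{d_Z-b}\right\rfloor\le d_Z.$$ In particular, if $b<d_Z/2$ then $|\mathcal{T}_{L_0}(b)|\le1$ (point identification).
   Context: $\|v\|_0$ is the number of nonzero components of $v$. In the model $Y:=\theta^*\Phi(X)+g_y(Z,\epsilon_y)$ with scalar $\Phi$, $\beta_\Phi=\mathrm{Cov}(\Phi(X),Z)$, $\beta_y=\mathrm{Cov}(Y,Z)$, and $\|\beta_y-\theta\beta_\Phi\|_0\le b$ expresses that at most $b$ of the $d_Z$ candidate instruments are invalid. *)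

From mathcomp Require Import all_boot all_order all_algebra.
Set Implicit Arguments. Unset Strict Implicit. Unset Printing Implicit Defensive.
Import Order.TTheory GRing.Theory Num.Theory.
Local Open Scope ring_scope.

Definition l0norm (R : ringType) (n : nat) (v : 'rV[R]_n) : nat :=
  #|[set i : 'I_n | v 0 i != 0]|.

Definition TL0 (R : ringType) (n : nat) (betaPhi betay : 'rV[R]_n) (b : nat)
  (theta : R) : Prop := (l0norm (betay - theta *: betaPhi) <= b)%N.

(* |S| <= k for a possibly infinite set S : every finite duplicate-free
   list of elements of S has length at most k. *)
Definition card_le (T : eqType) (S : T -> Prop) (k : nat) : Prop :=
  forall s : seq T, uniq s -> (forall x, x \in s -> S x) -> (size s <= k)%N.

From mathcomp Require Import all_boot all_order all_algebra.
From mathcomp Require Import zify.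
Set Implicit Arguments. Unset Strict Implicit. Unset Printing Implicit Defensive.
Import Order.TTheory GRing.Theory Num.Theory.
Local Open Scope ring_scope.

(* Each admissible theta makes at least [dZ - b] coordinates of
   [betay - theta betaPhi] vanish, and since no coordinate of betaPhi is zero,
   a coordinate vanishes for at most one theta.  So k admissible values use up
   k (dZ - b) distinct coordinates out of dZ. *)

Lemma disjoint_family_size_mul (T : finType) (I : eqType) (F : I -> {set T})
    (m : nat) (s : seq I) :
  uniq s -> {in s &, forall i j, i != j -> [disjoint F i & F j]} ->
  {in s, forall i, m <= #|F i|}%N ->
  (size s * m <= #|\bigcup_(i <- s) F i|)%N.
Proof.
elim: s => [|i s IHs] //= /andP[i_notin_s uniq_s] disjF large_F.
rewrite big_cons mulSn cardsU.
have -> : F i :&: \bigcup_(j <- s) F j = set0.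
  rewrite big_seq; apply: (big_ind (fun A => F i :&: A = set0)) => [|A B|j js].
  - exact: setI0.
  - by rewrite setIUr => -> ->; rewrite setU0.
  - apply/disjoint_setI0/disjF; rewrite ?mem_head ?inE ?js ?orbT //.
    by apply: contraNneq i_notin_s => ->.
rewrite cards0 subn0 leq_add ?large_F ?mem_head //.
apply: IHs => // [j k js ks|j js]; first by apply: disjF; rewrite inE ?js ?ks orbT.
by apply: large_F; rewrite inE js orbT.
Qed.

Definition zero_set (R : nzRingType) (n : nat) (v : 'rV[R]_n) : {set 'I_n} :=
  [set i | v 0 i == 0].

Lemma leq_card_zero_set (R : nzRingType) (n b : nat) (v : 'rV[R]_n) :
  (l0norm v <= b)%N -> (n - b <= #|zero_set v|)%N.
Proof.
have card_zero_set_l0norm : (#|zero_set v| + l0norm v = n)%N.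
  rewrite -[RHS]card_ord -(cardsC (zero_set v)); congr (_ + _)%N.
  by apply: eq_card => i; rewrite !inE.
lia.
Qed.

Section ZeroSetsOfPencil.

Variables (R : idomainType) (n : nat) (betaPhi betay : 'rV[R]_n).
Hypothesis betaPhi_neq0 : forall i : 'I_n, betaPhi 0 i != 0.

Lemma zero_sets_disjoint (t u : R) : t != u ->
  [disjoint zero_set (betay - t *: betaPhi) & zero_set (betay - u *: betaPhi)].
Proof.
move=> neq_tu; apply/pred0P => i /=; rewrite !inE !mxE !subr_eq0.
apply/negbTE/andP => -[/eqP yt /eqP yu].
by move: neq_tu; rewrite (mulIf (betaPhi_neq0 i) (etrans (esym yt) yu)) eqxx.
Qed.

Lemma size_TL0_mul (b : nat) (s : seq R) :
  uniq s -> (forall t, t \in s -> TL0 betaPhi betay b t) ->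
  (size s * (n - b) <= n)%N.
Proof.
move=> uniq_s TL0s.
rewrite -[X in (_ <= X)%N]card_ord -cardsT.
apply: leq_trans (subset_leq_card (subsetT _)).
apply: disjoint_family_size_mul => // [t u _ _|t /TL0s]; first exact: zero_sets_disjoint.
exact: leq_card_zero_set.
Qed.

End ZeroSetsOfPencil.

Theorem mainTheorem5 (R : realFieldType) (dZ : nat) (betaPhi betay : 'rV[R]_dZ)
  (b : nat) :
  (forall i : 'I_dZ, betaPhi 0 i != 0) ->
  (b < dZ)%N ->
  [/\ card_le (TL0 betaPhi betay b) (dZ %/ (dZ - b)),
      (dZ %/ (dZ - b) <= dZ)%N
    & ((b.*2 < dZ)%N -> card_le (TL0 betaPhi betay b) 1)].
Proof.
move=> betaPhi_neq0 lt_b_dZ.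
have dZb_gt0 : (0 < dZ - b)%N by rewrite subn_gt0.
have card_leT : card_le (TL0 betaPhi betay b) (dZ %/ (dZ - b)).
  move=> s uniq_s TL0s; rewrite leq_divRL //.
  exact: size_TL0_mul betaPhi_neq0 _ _ uniq_s TL0s.
split=> // [|lt_2b_dZ]; first exact: leq_div.
have le_div1 : (dZ %/ (dZ - b) <= 1)%N by rewrite -ltnS ltn_divLR //; lia.
by move=> s uniq_s TL0s; apply: leq_trans (card_leT s uniq_s TL0s) le_div1.
Qed.
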